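(* Let $n\ge 1$ and consider any sequence of legal moves starting from $\{F_1^n\}$ that uses only splitting moves and $C_1$ moves. Then in every game state reached, if $i<j$ are indices such that $F_i$ and $F_j$ both occur in the state and no $F_l$ with $i<l<j$ occurs, then $j-i\le 3$.
   Context: Fibonacci numbers are indexed by $F_1=1$, $F_2=2$, $F_{i+1}=F_i+F_{i-1}$. A game state is a finite multiset of Fibonacci numbers (tracked by index); $\{F_1^n\}$ denotes $n$ copies of $F_1$. The moves considered are: $C_1$: replace $F_1,F_1$ by $F_2$; $S_2$: replace $F_2,F_2$ by $F_1,F_3$; for $i\ge 3$, $S_i$: replace $F_i,F_i$ by $F_{i-2},F_{i+1}$ (the ''splitting moves''); each requires the two replaced elements to be present in the state. *)

From mathcomp Require Import all_boot.
Set Implicit Arguments. Unset Strict Implicit. Unset Printing Implicit Defensive.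

(* A game state is a finite multiset of Fibonacci numbers, tracked by index:
   [s i] is the multiplicity of F_i in the state (F_1 = 1, F_2 = 2, ...).
   Index 0 is unused. *)
Definition state := nat -> nat.

Definition init_state (n : nat) : state := fun k => if k == 1 then n else 0.

Definition add1 (s : state) (i : nat) : state :=
  fun k => if k == i then (s k).+1 else s k.
Definition sub2 (s : state) (i : nat) : state :=
  fun k => if k == i then s k - 2 else s k.

Inductive split_or_C1_move : state -> state -> Prop :=
| move_C1 (s : state) : 2 <= s 1 ->
    split_or_C1_move s (add1 (sub2 s 1) 2)
| move_S2 (s : state) : 2 <= s 2 ->
    split_or_C1_move s (add1 (add1 (sub2 s 2) 1) 3)
| move_S (i : nat) (s : state) : 3 <= i -> 2 <= s i ->
    split_or_C1_move s (add1 (add1 (sub2 s i) (i - 2)) (i + 1)).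

Inductive reachable (n : nat) : state -> Prop :=
| reach_init : reachable n (init_state n)
| reach_step (s t : state) : reachable n s -> split_or_C1_move s t -> reachable n t.

From mathcomp Require Import all_boot.
From mathcomp Require Import zify.

(* Call a state "short-gapped" if above every occupied index i
   that is not the largest one there is another occupied index in
   (i, i + 3].  The initial state {F_1^n} has a single occupied index, so it
   is short-gapped, and we show every move preserves the property; the
   theorem then follows because an occupied index in (i, i + 3] must be j
   itself when nothing is occupied strictly between i and j.

   For preservation we only use five coarse facts about a move that
   consumes two copies of F_k (k = 1 for C_1, k = i for S_i): F_k was
   present, F_(k+1) is present afterwards, no other multiplicity drops,
   newly occupied indices lie in [k - 2, k + 1], and F_(k-2) is present
   afterwards when k >= 3.  The invariant argument is carried out for any
   pair of states related in this way ("consumes_at"), splitting on the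
   position of the lower index relative to k. *)

Definition short_gaps (s : state) : Prop :=
  forall i j, 0 < s i -> 0 < s j -> i < j ->
  exists2 l, i < l <= i + 3 & 0 < s l.

Definition consumes_at (k : nat) (s t : state) : Prop :=
  [/\ 0 < s k, 0 < t k.+1,
      (forall x, x != k -> s x <= t x),
      (forall x, 0 < t x -> 0 < s x \/ k - 2 <= x <= k + 1) &
      (3 <= k -> 0 < t (k - 2))].

Lemma move_consumes_at (s t : state) :
  split_or_C1_move s t -> exists k, consumes_at k s t.
Proof.
case=> [s0 H|s0 H|i s0 Hi H]; [exists 1|exists 2|exists i];
  split; rewrite /add1 /sub2 => //; try move=> x;
  repeat (case: eqP => [?|?]; subst => //=); lia.
Qed.

Section ConsumingMove.

Variables (k : nat) (s t : state).
Hypothesis move : consumes_at k s t.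
Hypothesis gaps_s : short_gaps s.

Lemma occupied_kept (x : nat) : x != k -> 0 < s x -> 0 < t x.
Proof. by case: move => _ _ kept _ _ /kept; lia. Qed.

Lemma short_gap_near (i : nat) : k - 2 <= i <= k ->
  exists2 l, i < l <= i + 3 & 0 < t l.
Proof. by case: move => _ tk1 _ _ _ near; exists k.+1; lia. Qed.

(* Above k nothing was lost, so the gap witnesses of s still serve;
   only k + 1 can be newly occupied, and then k supplies the chain. *)
Lemma short_gap_above (i j : nat) : k < i -> i < j -> 0 < t i -> 0 < t j ->
  exists2 l, i < l <= i + 3 & 0 < t l.
Proof.
case: move => sk _ _ fresh _ ki ij ti tj.
have sj : 0 < s j by case: (fresh j tj); lia.
have lift l : i < l <= i + 3 -> 0 < s l -> exists2 l, i < l <= i + 3 & 0 < t l.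
  by move=> il sl; exists l => //; apply: occupied_kept sl; apply/eqP; lia.
case: (fresh i ti) => [si | near_i].
  by have [l il sl] := gaps_s _ _ si sj ij; exact: lift il sl.
have ei : i = k.+1 by lia.
have [l kl sl] := gaps_s _ _ sk sj (ltn_trans ki ij).
case: (l =P k.+1) => [el | nl]; last exact: (lift l) (ltac:(lia)) sl.
rewrite el -ei in sl; have [l' il' sl'] := gaps_s _ _ sl sj ij.
exact: lift il' sl'.
Qed.

(* Below k - 2 the lower index was already occupied; if the witness in s
   is the consumed index k, the freshly occupied k - 2 replaces it. *)
Lemma short_gap_below (i j : nat) : i < k - 2 -> i < j -> 0 < t i -> 0 < t j ->
  exists2 l, i < l <= i + 3 & 0 < t l.
Proof.
case: move => sk _ _ fresh low ik ij ti tj.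
have si : 0 < s i by case: (fresh i ti); lia.
have [j' sj' ij'] : exists2 j', 0 < s j' & i < j'.
  by case: (fresh j tj) => [sj | ?]; [exists j | exists k; lia].
have [l il sl] := gaps_s _ _ si sj' ij'.
case: (l =P k) => [el | nl]; first by exists (k - 2); [lia | apply: low; lia].
by exists l => //; apply: occupied_kept sl; apply/eqP.
Qed.

Lemma short_gaps_step : short_gaps t.
Proof.
move=> i j ti tj ij.
case: (ltnP i (k - 2)) => [low | ge2]; first exact: short_gap_below low ij ti tj.
case: (leqP i k) => [lek | gtk]; first by apply: short_gap_near; lia.
exact: short_gap_above gtk ij ti tj.
Qed.

End ConsumingMove.

Lemma reachable_short_gaps (n : nat) (s : state) :
  reachable n s -> short_gaps s.
Proof.
elim=> [|s0 t _ IH /move_consumes_at [k mv]]; last exact: short_gaps_step mv IH.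
by move=> i j; rewrite /init_state; case: (i =P 1); case: (j =P 1) => //; lia.
Qed.

Theorem mainTheorem11 (n : nat) (s : state) (i j : nat) :
  1 <= n -> reachable n s ->
  i < j -> 0 < s i -> 0 < s j ->
  (forall l, i < l -> l < j -> s l = 0) ->
  j - i <= 3.
Proof.
move=> _ /reachable_short_gaps gaps ij si sj empty_between.
have [l il sl] := gaps i j si sj ij.
case: (ltnP l j) => [lj | jl]; last lia.
by move: (empty_between l (ltac:(lia)) lj); lia.
Qed.
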